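(* Consider a FIFO system in which packets, numbered $1,2,\dots$ in order of arrival, with sizes $l_k$, arrive at times $A_1\le A_2\le\cdots$ and packet $n$ starts its service at time $Q_n$, service being non-preemptive and in order. If the system offers a service curve $\beta$, then for each packet $n$ there exists $m\le n$ such that $$\beta(Q_n-A_m)\le\sum_{k=m}^{n-1}l_k.$$
   Context: $N(t)$ denotes the number of bits that have arrived up to time $t$ and $O(t)$ the number of bits served up to time $t$ (so that just after $Q_n$ the output equals $l_1+\dots+l_{n-1}$). A function $\beta:[0,\infty)\to[0,\infty)$, wide-sense increasing, is a service curve for the system if for every $t$ there exists $s\le t$ with $O(t)\ge N(s)+\beta(t-s)$. An empty sum equals $0$. *)

From HB Require Import structures.
From mathcomp Require Import all_boot all_order all_algebra.
From mathcomp Require Import boolp classical_sets reals constructive_ereal ereal esum.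
Set Implicit Arguments. Unset Strict Implicit. Unset Printing Implicit Defensive.
Import Order.TTheory GRing.Theory Num.Theory.
Local Open Scope ring_scope.
Local Open Scope classical_set_scope.
Local Open Scope ereal_scope.

(* N(t) = number of bits arrived up to time t (arrival counted at A k <= t),
   as an extended real (a possibly infinite sum of nonnegative sizes). *)
Definition arrived {R : realType} (A l : nat -> R) (t : R) : \bar R :=
  \esum_(k in [set k : nat | (0 < k)%N /\ (A k <= t)%R]) (l k)%:E.

Definition service_curve {R : realType} (N : R -> \bar R) (O : R -> R)
    (beta : R -> R) : Prop :=
  forall t : R, (0 <= t)%R ->
    exists s : R, [/\ (0 <= s)%R, (s <= t)%R &
      N s + (beta (t - s))%:E <= (O t)%:E].

(* Apply the service curve at t = Q n and let m be the first of the packets 1, ..., n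
   arriving after the corresponding time s.  Packets 1, ..., m-1 then arrived by s, so
   N(s) >= l_1 + ... + l_(m-1) while O(Q n) = l_1 + ... + l_(n-1); the service-curve
   inequality leaves beta(Q n - s) <= l_m + ... + l_(n-1), and beta(Q n - A m) is smaller
   because s < A m.  Such an m exists: if all packets 1, ..., n had arrived by s, the same
   inequality would give l_1 + ... + l_n <= l_1 + ... + l_(n-1), contradicting l_n > 0. *)

From HB Require Import structures.
From mathcomp Require Import all_boot all_order all_algebra.
From mathcomp Require Import boolp classical_sets reals constructive_ereal ereal esum.
From mathcomp Require Import fsbigop cardinality.
Set Implicit Arguments.
Unset Strict Implicit.
Unset Printing Implicit Defensive.

Import Order.TTheory GRing.Theory Num.Theory.
Local Open Scope ring_scope.

Section Arrivals.
Variable R : realType.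
Implicit Types (A l : nat -> R) (s : R).

Lemma nondecreasing_arrivals A :
  (forall k, (0 < k)%N -> A k <= A k.+1) ->
  forall i j, (0 < i)%N -> (i <= j)%N -> A i <= A j.
Proof.
move=> hA i j i0 ij.
have convex a b : (0 < a)%N -> (0 < b)%N -> forall k, (a < k < b)%N -> (0 < k)%N.
  by move=> a0 _ k /andP[/(leq_ltn_trans _) ->].
have step k : (0 < k)%N -> (0 < k.+1)%N -> A k <= A k.+1 by move=> /hA.
apply: (@homo_leq_in _ [pred k | 0 < k]%N A <=%R lexx le_trans convex step) => //.
exact: leq_trans ij.
Qed.

Lemma sum_le_arrived A l s m :
  (forall k, (0 < k)%N -> (k < m)%N -> A k <= s) ->
  ((\sum_(1 <= k < m) l k)%:E <= arrived A l s)%E.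
Proof.
move=> arrived_by_s; apply: esum_ge; exists [set` index_iota 1 m]%classic.
  split=> [|k /=]; first exact: finite_seq.
  by rewrite mem_index_iota => /andP[k0 km]; split=> //; exact: arrived_by_s.
by rewrite -fsbig_seq ?iota_uniq // sumEFin.
Qed.

Lemma first_arrival_after A s n :
  exists2 m, (0 < m <= n.+1)%N &
    (forall k, (0 < k)%N -> (k < m)%N -> A k <= s) /\ ((m <= n)%N -> s < A m).
Proof.
elim: n => [|n [m /andP[m0 mn] [early late]]].
  by exists 1%N => //; split=> // -[|k].
move: mn; rewrite leq_eqVlt => /orP[/eqP mn|mn]; last first.
  by exists m; rewrite ?m0 ?(leqW (ltnW mn)) //; split=> // _; exact: late.
subst m.
have [sA|As] := ltP s (A n.+1); first by exists n.+1; rewrite ?leqnSn //; split.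
exists n.+2; rewrite ?leqnn //; split=> [k k0|]; last by rewrite ltnn.
by rewrite ltnS leq_eqVlt => /orP[/eqP -> //|]; exact: early.
Qed.

End Arrivals.

Theorem lemma2 (R : realType) (A Q l : nat -> R) (O : R -> R) (beta : R -> R)
  (hl : forall k, (0 < k)%N -> 0 < l k)
  (hA0 : 0 <= A 1%N)
  (hA : forall k, (0 < k)%N -> A k <= A k.+1)
  (hAQ : forall k, (0 < k)%N -> A k <= Q k)
  (hQ : forall k, (0 < k)%N -> Q k <= Q k.+1)
  (hO : forall x y, x <= y -> O x <= O y)
  (hOQ : forall n, (0 < n)%N -> O (Q n) = \sum_(1 <= k < n) l k)
  (hbeta0 : forall x, 0 <= x -> 0 <= beta x)
  (hbeta : forall x y, 0 <= x -> x <= y -> beta x <= beta y)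
  (hsc : service_curve (arrived A l) O beta) :
  forall n, (0 < n)%N ->
    exists m, [/\ (0 < m)%N, (m <= n)%N &
      beta (Q n - A m) <= \sum_(m <= k < n) l k].
Proof.
move=> n n0.
have A_le_Qn k : (0 < k)%N -> (k <= n)%N -> A k <= Q n.
  by move=> k0 kn; rewrite (le_trans _ (hAQ n n0)) ?nondecreasing_arrivals.
have [s [s0 sQ served]] := hsc (Q n) (le_trans hA0 (A_le_Qn 1%N isT n0)).
have [m /andP[m0 mn] [early late]] := first_arrival_after A s n.
have service_bound : \sum_(1 <= k < m) l k + beta (Q n - s) <= \sum_(1 <= k < n) l k.
  rewrite -lee_fin EFinD -(hOQ n n0); apply: le_trans served.
  by rewrite leeD2r // sum_le_arrived.
have beta_ge0 : 0 <= beta (Q n - s) by rewrite hbeta0 // subr_ge0.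
have {}mn : (m <= n)%N.
  rewrite leq_eqVlt ltnS in mn; case/orP: mn => [/eqP mn|] //; subst m.
  move: service_bound; rewrite big_nat_recr //= -addrA gerDl.
  by rewrite leNgt ltr_wpDr ?hl.
exists m; split=> //; apply: le_trans (_ : beta (Q n - s) <= _).
  by rewrite hbeta ?subr_ge0 ?A_le_Qn // lerD2l lerN2 ltW ?late.
by move: service_bound; rewrite (big_cat_nat m0 mn) lerD2l.
Qed.
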